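(* Let $J\ge2$. For any $\delta_1>0$ and $\vec\lambda\in(0,\infty)^J$ with $$\min_{\emptyset\ne\mathcal I\subseteq\{1,\dots,J\}}\Big(\frac{|A^*_{\mathcal I}\vec\lambda^D_{\mathcal I}|}{|\vec\lambda^D_{\mathcal I}|}+\sum_{i\notin\mathcal I}\frac{\lambda_i}{\lambda_{\max}}\Big)\ge\delta_1,$$ we have $\sum_{i=1}^J(A^*\vec\lambda^D)_i^2\lambda_i^{2D-2}\simeq_{\delta_1}\lambda_{\max}^{4D-2}$ and $\lambda_{\mathrm{max2}}\gtrsim\delta_1\lambda_{\max}$.
   Context: $N\ge7$, $D=\frac{N-2}2$. A configuration: signs $\iota_i\in\{\pm1\}$ and distinct points $z_1^*,\dots,z_J^*\in\mathbb{R}^N$. $A^*_{ij}=\mathbf 1_{i\ne j}\kappa_0\kappa_\infty\frac{\iota_i\iota_j}{|z_i^*-z_j^*|^{N-2}}$ with fixed positive constants $\kappa_0,\kappa_\infty$. $A^*_{\mathcal I}$ is the submatrix of $A^*$ with rows and columns in $\mathcal I$; $\vec\lambda^D_{\mathcal I}=(\lambda_i^D)_{i\in\mathcal I}$, $\vec\lambda^D=(\lambda_i^D)_i$. $\lambda_{\max}$, $\lambda_{\mathrm{max2}}$ are the largest and second largest of $\lambda_1,\dots,\lambda_J$. Implicit constants may depend on $N,J$ and the configuration (and on $\delta_1$ where indicated), not on $\vec\lambda$. *)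

From HB Require Import structures.
From mathcomp Require Import all_boot all_order all_algebra.
From mathcomp Require Import all_classical all_reals all_analysis.
Set Implicit Arguments. Unset Strict Implicit. Unset Printing Implicit Defensive.
Import Order.TTheory GRing.Theory Num.Theory.
Local Open Scope ring_scope.

Section Defs.
Variable R : realType.

Definition Dexp (N : nat) : R := (N%:R - 2) / 2.

Definition eucl_dist (N : nat) (x y : 'I_N -> R) : R :=
  Num.sqrt (\sum_(k < N) (x k - y k) ^+ 2).

Definition Astar (N J : nat) (kappa0 kappaInf : R) (iota : 'I_J -> R)
    (z : 'I_J -> 'I_N -> R) (i j : 'I_J) : R :=
  if i != j then kappa0 * kappaInf * iota i * iota j / (eucl_dist (z i) (z j)) ^+ (N - 2)
  else 0.

Definition lamD (N J : nat) (lam : 'I_J -> R) (i : 'I_J) : R := lam i `^ Dexp N.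

Definition normI (J : nat) (I : {set 'I_J}) (v : 'I_J -> R) : R :=
  Num.sqrt (\sum_(i in I) v i ^+ 2).

Definition subMulVec (J : nat) (A : 'I_J -> 'I_J -> R) (I : {set 'I_J})
    (v : 'I_J -> R) (i : 'I_J) : R := \sum_(j in I) A i j * v j.

Definition sorted_vals (J : nat) (lam : 'I_J -> R) : seq R :=
  sort (fun x y : R => y <= x) [seq lam i | i <- enum 'I_J].

Definition lam_max (J : nat) (lam : 'I_J -> R) : R := nth 0 (sorted_vals lam) 0.
Definition lam_max2 (J : nat) (lam : 'I_J -> R) : R := nth 0 (sorted_vals lam) 1.

Definition minTerm (N J : nat) (A : 'I_J -> 'I_J -> R) (lam : 'I_J -> R)
    (I : {set 'I_J}) : R :=
  normI I (subMulVec A I (lamD N lam)) / normI I (lamD N lam)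
  + \sum_(i in ~: I) lam i / lam_max lam.

Definition mainSum (N J : nat) (A : 'I_J -> 'I_J -> R) (lam : 'I_J -> R) : R :=
  \sum_(i < J) (\sum_(j < J) A i j * lamD N lam j) ^+ 2 * lam i `^ (2 * Dexp N - 2).

End Defs.

From HB Require Import structures.
From mathcomp Require Import all_boot all_order all_algebra.
From mathcomp Require Import all_classical all_reals all_analysis.
From mathcomp Require Import ring lra.
Import Order.TTheory GRing.Theory Num.Theory.
Set Implicit Arguments. Unset Strict Implicit. Unset Printing Implicit Defensive.
Local Open Scope ring_scope.

(* Only two features of A* matter: its diagonal vanishes and its entries are
   bounded, say with total mass S = sum_ij |A_ij|.  Taking I = {m} with
   lambda_m = lambda_max, the vanishing diagonal leaves
   delta1 <= sum_{i<>m} lambda_i / lambda_max <= (J-1) lambda_max2 / lambda_max.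
   For the sum, |(A lambda^D)_i| <= S lambda_max^D gives the upper bound.  For
   the lower bound take I = {i : lambda_i >= e lambda_max} with e small in terms
   of delta1, J and S: the indices outside I contribute at most J e to the
   minimised quantity and at most S e lambda_max^D to each (A lambda^D)_i, so
   sum_{i in I} (A lambda^D)_i^2 >~ delta1^2 lambda_max^(2D), while on I the
   weights lambda_i^(2D-2) are at least (e lambda_max)^(2D-2) because D >= 1. *)

Section SortedValues.
Variables (R : realType) (J : nat) (lam : 'I_J -> R).

Lemma size_sorted_vals : size (sorted_vals lam) = J.
Proof. by rewrite size_sort size_map size_enum_ord. Qed.

Lemma perm_sorted_vals : perm_eq (sorted_vals lam) [seq lam i | i <- enum 'I_J].
Proof. exact: permEl (perm_sort _ _). Qed.

Lemma nth_sorted_vals_le k l : (k <= l < J)%N ->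
  nth 0 (sorted_vals lam) l <= nth 0 (sorted_vals lam) k.
Proof.
move=> /andP[kl lJ].
have ge_trans : transitive (fun x y : R => y <= x).
  by move=> y x z /= xy yz; exact: le_trans yz xy.
have ge_sorted : sorted (fun x y : R => y <= x) (sorted_vals lam).
  by apply: sort_sorted => x y; exact: le_total.
apply: (sorted_leq_nth ge_trans _ 0 ge_sorted) => //; rewrite inE size_sorted_vals //.
exact: leq_ltn_trans lJ.
Qed.

Lemma lam_maxP : (0 < J)%N ->
  exists m, lam_max lam = lam m /\ forall i, lam i <= lam m.
Proof.
move=> J_gt0; have mem_sv x : (x \in sorted_vals lam) = (x \in [seq lam i | i <- enum 'I_J]).
  exact: (perm_mem perm_sorted_vals).
have : lam_max lam \in sorted_vals lam by rewrite mem_nth // size_sorted_vals.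
rewrite mem_sv => /mapP[m _ Lm]; exists m; split => // i; rewrite -Lm.
have : lam i \in sorted_vals lam by rewrite mem_sv map_f // mem_enum.
move=> /(nthP 0)[k]; rewrite size_sorted_vals => kJ <-.
exact: nth_sorted_vals_le.
Qed.

Lemma sum_le_lam_max_add_lam_max2 : (1 < J)%N ->
  \sum_i lam i <= lam_max lam + J.-1%:R * lam_max2 lam.
Proof.
move=> J_gt1.
rewrite -big_enum -(big_map lam xpredT id) -(perm_big _ perm_sorted_vals).
rewrite (big_nth 0) size_sorted_vals big_ltn ?(ltn_trans _ J_gt1) // lerD2l.
rewrite mulr_natl -(subn1 J) -sumr_const_nat !big_nat.
by apply: ler_sum => k /andP[k_gt0 kJ]; apply: nth_sorted_vals_le; rewrite k_gt0.
Qed.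

End SortedValues.

Section SumBounds.
Variables (R : numDomainType) (I : finType).

Lemma ler_sum_nneg_pred (P : pred I) (F : I -> R) :
  (forall i, 0 <= F i) -> \sum_(i | P i) F i <= \sum_i F i.
Proof.
by move=> F_ge0; rewrite [X in _ <= X](bigID P) /= lerDl sumr_ge0.
Qed.

Lemma ler_sum_card_mul (P : pred I) (F : I -> R) (c : R) :
  0 <= c -> (forall i, P i -> F i <= c) -> \sum_(i | P i) F i <= #|I|%:R * c.
Proof.
move=> c_ge0 F_le.
have sum_le : \sum_(i | P i) F i <= \sum_(i | P i) c by exact: ler_sum.
apply: le_trans sum_le (le_trans (ler_sum_nneg_pred P (fun=> c_ge0)) _).
by rewrite sumr_const mulr_natl.
Qed.

Lemma norm_sum_mul_le (P : pred I) (a v : I -> R) (b : R) : 0 <= b ->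
  (forall i, P i -> 0 <= v i <= b) ->
  `|\sum_(i | P i) a i * v i| <= (\sum_i `|a i|) * b.
Proof.
move=> b_ge0 v_bnd; apply: le_trans (ler_norm_sum _ _ _) _.
rewrite mulr_suml; apply: le_trans (ler_sum_nneg_pred P _) => [|i]; last first.
  by rewrite mulr_ge0.
apply: ler_sum => i /v_bnd /andP[v_ge0 v_le].
by rewrite normrM (ger0_norm v_ge0) ler_wpM2l.
Qed.

End SumBounds.

Lemma sqr_le_of_norm_le (R : realDomainType) (x c : R) : `|x| <= c -> x ^+ 2 <= c ^+ 2.
Proof. by rewrite ler_norml => /andP[? ?]; nra. Qed.

Lemma sqrD_ge (R : realFieldType) (a t : R) : a ^+ 2 / 2 - t ^+ 2 <= (a + t) ^+ 2.
Proof. have := sqr_ge0 (a / 2 + t); nra. Qed.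

Definition nondegenerate (R : realType) (N J : nat) (A : 'I_J -> 'I_J -> R)
    (lam : 'I_J -> R) (d : R) :=
  forall I : {set 'I_J}, I != finset.set0 -> d <= minTerm N A lam I.

Lemma minTerm_set1 (R : realType) (N J : nat) (A : 'I_J -> 'I_J -> R) lam m :
  A m m = 0 -> minTerm N A lam [set m] = (\sum_(i in ~: [set m]) lam i) / lam_max lam.
Proof.
move=> Amm; rewrite /minTerm /normI /subMulVec !big_set1 Amm mul0r expr0n sqrtr0.
by rewrite mul0r add0r mulr_suml.
Qed.

Lemma lam_max2_ge (R : realType) (N J : nat) (A : 'I_J -> 'I_J -> R) lam d :
  (1 < J)%N -> (forall i, A i i = 0) -> (forall i, 0 < lam i) ->
  nondegenerate N A lam d -> J.-1%:R^-1 * d * lam_max lam <= lam_max2 lam.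
Proof.
move=> J_gt1 A0 lam_gt0 nondeg.
have [m [Lm lam_le]] := lam_maxP lam (ltnW J_gt1).
have set1_ne0 : [set m] != finset.set0 by apply/set0Pn; exists m; rewrite inE.
have := nondeg _ set1_ne0; rewrite minTerm_set1 // Lm ler_pdivlMr //.
have -> : \sum_(i in ~: [set m]) lam i = \sum_i lam i - lam m.
  by rewrite [X in _ = X - _](bigD1 m) //= addrC addrK; apply: eq_bigl => i; rewrite !inE.
have J1_gt0 : 0 < J.-1%:R :> R by rewrite ltr0n -subn1 subn_gt0.
rewrite -mulrA ler_pdivrMl //.
by have := sum_le_lam_max_add_lam_max2 lam J_gt1; rewrite Lm; lra.
Qed.

Lemma Dexp_ge1 (R : realType) (N : nat) : (4 <= N)%N -> 1 <= Dexp R N.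
Proof. by rewrite -(ler_nat R) /Dexp => ?; lra. Qed.

Lemma powR_4D_sub2 (R : realType) (x D : R) : 0 < x ->
  x `^ (4 * D - 2) = (x `^ D) ^+ 2 * x `^ (2 * D - 2).
Proof.
move=> x_gt0; have powRD' r s : x `^ (r + s) = x `^ r * x `^ s.
  by rewrite powRD // (gt_eqF x_gt0) implybT.
by rewrite expr2 -!powRD'; congr (_ `^ _); lra.
Qed.

Definition abs_sum (R : numDomainType) (J : nat) (A : 'I_J -> 'I_J -> R) : R :=
  \sum_i \sum_j `|A i j|.

Lemma abs_sum_ge0 (R : numDomainType) (J : nat) (A : 'I_J -> 'I_J -> R) : 0 <= abs_sum A.
Proof. by apply: sumr_ge0 => i _; exact: sumr_ge0. Qed.

Lemma row_abs_sum_le (R : numDomainType) (J : nat) (A : 'I_J -> 'I_J -> R) i :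
  \sum_j `|A i j| <= abs_sum A.
Proof.
have row_ge0 k : 0 <= \sum_j `|A k j| by exact: sumr_ge0.
by have := ler_sum_nneg_pred (pred1 i) row_ge0; rewrite big_pred1_eq.
Qed.

Section MainSum.
Variables (R : realType) (N J : nat) (A : 'I_J -> 'I_J -> R) (lam : 'I_J -> R) (m : 'I_J).
Hypothesis D_ge1 : 1 <= Dexp R N.
Hypothesis lam_gt0 : forall i, 0 < lam i.
Hypothesis lam_le : forall i, lam i <= lam m.

Local Notation D := (Dexp R N).
Local Notation L := (lam m).
Local Notation v := (lamD N lam).

Let D_ge0 : 0 <= D. Proof. exact: le_trans ler01 D_ge1. Qed.
Let D2_ge0 : 0 <= 2 * D - 2. Proof. by have := D_ge1; lra. Qed.

Lemma lamD_ge0 j : 0 <= v j.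
Proof. exact: powR_ge0. Qed.

Lemma lamD_le_max j : v j <= L `^ D.
Proof.
by rewrite /lamD ge0_ler_powR ?nnegrE ?lam_le ?(ltW (lam_gt0 _)).
Qed.

Lemma norm_mulVec_le (P : pred 'I_J) i b : 0 <= b -> (forall j, P j -> v j <= b) ->
  `|\sum_(j | P j) A i j * v j| <= abs_sum A * b.
Proof.
move=> b_ge0 v_le; apply: le_trans (norm_sum_mul_le (A i) b_ge0 _) _.
  by move=> j Pj; rewrite lamD_ge0 v_le.
by rewrite ler_wpM2r // row_abs_sum_le.
Qed.

Lemma mainSum_le : mainSum N A lam <= J%:R * abs_sum A ^+ 2 * L `^ (4 * D - 2).
Proof.
rewrite powR_4D_sub2 //.
have -> : J%:R * abs_sum A ^+ 2 * ((L `^ D) ^+ 2 * L `^ (2 * D - 2)) =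
          #|'I_J|%:R * ((abs_sum A * L `^ D) ^+ 2 * L `^ (2 * D - 2)).
  by rewrite card_ord; ring.
apply: ler_sum_card_mul => [|i _]; first by rewrite mulr_ge0 ?sqr_ge0 ?powR_ge0.
apply: ler_pM; rewrite ?sqr_ge0 ?powR_ge0 //.
  apply: sqr_le_of_norm_le; apply: norm_mulVec_le; first exact: powR_ge0.
  by move=> j _; exact: lamD_le_max.
by rewrite ge0_ler_powR ?nnegrE ?lam_le ?(ltW (lam_gt0 _)).
Qed.

Section LowerBound.
Variables (d e : R).
Hypotheses (e_gt0 : 0 < e) (e_le1 : e <= 1).
Hypothesis lam_max_m : lam_max lam = L.

Local Notation I := [set i | e * L <= lam i].

Hypothesis nondeg_I : d <= minTerm N A lam I.
Hypothesis J_e_le : 2 * (J%:R * e) <= d.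
Hypothesis J_S_e_le : 16 * (J%:R * (abs_sum A * e) ^+ 2) <= d ^+ 2.

Let d2_ge0 : 0 <= d / 2.
Proof. by rewrite divr_ge0 // (le_trans _ J_e_le) // !mulr_ge0 // ltW. Qed.

Lemma lamD_notin_le j : j \notin I -> v j <= e * L `^ D.
Proof.
rewrite inE -ltNge => lt_eL.
have L_ge0 : 0 <= L := ltW (lam_gt0 m).
apply: le_trans (_ : (e * L) `^ D <= _).
  by rewrite /lamD ge0_ler_powR ?nnegrE ?D_ge0 ?(ltW lt_eL) ?(ltW (lam_gt0 _)) ?mulr_ge0 ?(ltW e_gt0).
by rewrite powRM ?(ltW e_gt0) // ler_wpM2r ?powR_ge0 // ge1r_powR ?e_gt0.
Qed.

Lemma normI_lamD_ge : L `^ D <= normI I v.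
Proof.
have mI : m \in I by rewrite inE ler_piMl // ltW.
rewrite /normI -(ger0_norm (powR_ge0 _ _)) -sqrtr_sqr ler_sqrt ?sumr_ge0 //.
  by rewrite (bigD1 m) //= lerDl sumr_ge0 // => *; exact: sqr_ge0.
by move=> *; exact: sqr_ge0.
Qed.

Lemma sum_notin_le : \sum_(i in ~: I) lam i / lam_max lam <= J%:R * e.
Proof.
apply: le_trans (_ : #|'I_J|%:R * e <= _); last by rewrite card_ord.
apply: ler_sum_card_mul => [|i]; first exact: ltW.
rewrite !inE -ltNge lam_max_m => lt_eL.
by rewrite ler_pdivrMr // ltW.
Qed.

Lemma normI_subMulVec_ge : d / 2 * L `^ D <= normI I (subMulVec A I v).
Proof.
have v_gt0 : 0 < normI I v := lt_le_trans (powR_gt0 _ (lam_gt0 m)) normI_lamD_ge.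
have : d / 2 <= normI I (subMulVec A I v) / normI I v.
  by have := sum_notin_le; have := J_e_le; move: nondeg_I; rewrite /minTerm; lra.
rewrite ler_pdivlMr // => le_d2; apply: le_trans le_d2.
by rewrite ler_wpM2l ?normI_lamD_ge.
Qed.

Lemma sum_in_sqr_ge :
  d ^+ 2 / 16 * (L `^ D) ^+ 2 <= \sum_(i in I) (\sum_j A i j * v j) ^+ 2.
Proof.
set a := subMulVec A I v; set t := fun i => \sum_(j in ~: I) A i j * v j.
have split_row i : \sum_j A i j * v j = a i + t i.
  by rewrite (bigID (mem I)) /=; congr (_ + _); apply: eq_bigl => j; rewrite !inE.
have t_le i : `|t i| <= abs_sum A * (e * L `^ D).
  apply: norm_mulVec_le => [|j]; first by rewrite mulr_ge0 ?powR_ge0 ?ltW.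
  by rewrite inE; exact: lamD_notin_le.
have a_sqr : (d / 2 * L `^ D) ^+ 2 <= \sum_(i in I) a i ^+ 2.
  rewrite -(@sqr_sqrtr _ (\sum_(i in I) a i ^+ 2)); last by rewrite sumr_ge0 // => *; exact: sqr_ge0.
  apply: sqr_le_of_norm_le; rewrite ger0_norm; first exact: normI_subMulVec_ge.
  by rewrite mulr_ge0 ?powR_ge0.
have t_sqr : \sum_(i in I) t i ^+ 2 <= d ^+ 2 / 16 * (L `^ D) ^+ 2.
  apply: le_trans (_ : #|'I_J|%:R * (abs_sum A * (e * L `^ D)) ^+ 2 <= _).
    by apply: ler_sum_card_mul => [|i _]; rewrite ?sqr_ge0 ?sqr_le_of_norm_le.
  rewrite card_ord; have P2_ge0 := sqr_ge0 (L `^ D).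
  have -> : J%:R * (abs_sum A * (e * L `^ D)) ^+ 2 =
            J%:R * (abs_sum A * e) ^+ 2 * (L `^ D) ^+ 2 by ring.
  by rewrite ler_wpM2r //; have := J_S_e_le; lra.
apply: le_trans (_ : \sum_(i in I) (a i ^+ 2 / 2 - t i ^+ 2) <= _); last first.
  by apply: ler_sum => i _; rewrite split_row sqrD_ge.
by rewrite sumrB -mulr_suml; lra.
Qed.

Lemma mainSum_ge : e `^ (2 * D - 2) * (d ^+ 2 / 16) * L `^ (4 * D - 2) <= mainSum N A lam.
Proof.
have w_ge i : i \in I -> e `^ (2 * D - 2) * L `^ (2 * D - 2) <= lam i `^ (2 * D - 2).
  rewrite inE -powRM ?(ltW e_gt0) ?(ltW (lam_gt0 m)) // => le_eL.
  by rewrite ge0_ler_powR ?nnegrE ?mulr_ge0 ?(ltW e_gt0) ?(ltW (lam_gt0 _)).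
apply: le_trans (ler_sum_nneg_pred (mem I) _) => [|i]; last first.
  by rewrite mulr_ge0 ?sqr_ge0 ?powR_ge0.
apply: le_trans (_ : \sum_(i in I) (\sum_j A i j * v j) ^+ 2 *
                      (e `^ (2 * D - 2) * L `^ (2 * D - 2)) <= _); last first.
  by apply: ler_sum => i /w_ge; apply: ler_wpM2l; exact: sqr_ge0.
rewrite -mulr_suml powR_4D_sub2 //.
have -> : e `^ (2 * D - 2) * (d ^+ 2 / 16) * ((L `^ D) ^+ 2 * L `^ (2 * D - 2)) =
          (d ^+ 2 / 16 * (L `^ D) ^+ 2) * (e `^ (2 * D - 2) * L `^ (2 * D - 2)) by ring.
by rewrite ler_wpM2r ?mulr_ge0 ?powR_ge0 ?sum_in_sqr_ge.
Qed.

End LowerBound.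

End MainSum.

Lemma small_threshold_exists (R : realFieldType) (J S d : R) : 1 <= J -> 0 <= S -> 0 < d ->
  exists e, [/\ 0 < e, e <= 1, 2 * (J * e) <= d & 16 * (J * (S * e) ^+ 2) <= d ^+ 2].
Proof.
move=> J_ge1 S_ge0 d_gt0; set K := J * (1 + S).
have K_gt0 : 0 < K by rewrite mulr_gt0 //; lra.
set e := Num.min 1 (d / (4 * K)).
have e_gt0 : 0 < e by rewrite lt_min ltr01 divr_gt0 // mulr_gt0.
have K_e_le : K * e <= d / 4.
  have -> : d / 4 = K * (d / (4 * K)) by field; rewrite gt_eqF.
  by rewrite ler_wpM2l ?(ltW K_gt0) // /e ge_min lexx orbT.
have J_e_le : J * e <= K * e by rewrite ler_wpM2r ?(ltW e_gt0) // /K; nra.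
have S_e_le : J * (S * e) ^+ 2 <= (K * e) ^+ 2.
  have Se_le : (S * e) ^+ 2 <= ((1 + S) * e) ^+ 2.
    apply: sqr_le_of_norm_le; rewrite ger0_norm ?mulr_ge0 ?(ltW e_gt0) //.
    by rewrite ler_wpM2r ?(ltW e_gt0) ?lerDr.
  have -> : (K * e) ^+ 2 = J * J * ((1 + S) * e) ^+ 2 by rewrite /K; ring.
  have JX_ge0 : 0 <= J * ((1 + S) * e) ^+ 2 by rewrite mulr_ge0 ?sqr_ge0 //; lra.
  have : J * (S * e) ^+ 2 <= J * ((1 + S) * e) ^+ 2 by rewrite ler_wpM2l //; lra.
  nra.
have K_e_sqr : (K * e) ^+ 2 <= (d / 4) ^+ 2.
  by apply: sqr_le_of_norm_le; rewrite ger0_norm // mulr_ge0 ?ltW.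
exists e; split => //; [by rewrite /e ge_min lexx | lra | lra].
Qed.

Lemma mainSum_asymp (R : realType) (N J : nat) (A : 'I_J -> 'I_J -> R) (d : R) :
  (4 <= N)%N -> (0 < J)%N -> 0 < d ->
  exists c C : R, 0 < c /\ 0 < C /\
    forall lam : 'I_J -> R, (forall i, 0 < lam i) -> nondegenerate N A lam d ->
    c * lam_max lam `^ (4 * Dexp R N - 2) <= mainSum N A lam /\
    mainSum N A lam <= C * lam_max lam `^ (4 * Dexp R N - 2).
Proof.
move=> N_ge4 J_gt0 d_gt0.
have J_ge1 : 1 <= J%:R :> R by rewrite ler1n.
have [e [e_gt0 e_le1 J_e_le J_S_e_le]] := small_threshold_exists J_ge1 (abs_sum_ge0 A) d_gt0.
have S1_gt0 : 0 < 1 + abs_sum A by rewrite ltr_wpDr ?abs_sum_ge0.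
exists (e `^ (2 * Dexp R N - 2) * (d ^+ 2 / 16)), (J%:R * (1 + abs_sum A) ^+ 2).
split; first by rewrite mulr_gt0 ?powR_gt0 // divr_gt0 ?exprn_gt0.
split; first by rewrite mulr_gt0 ?ltr0n ?exprn_gt0.
move=> lam lam_gt0 nondeg; have D_ge1 := Dexp_ge1 R N_ge4.
have [m [Lm lam_le]] := lam_maxP lam J_gt0; rewrite Lm; split.
  apply: mainSum_ge => //; apply: nondeg; apply/set0Pn; exists m.
  by rewrite inE ler_piMl // ltW.
apply: le_trans (mainSum_le A D_ge1 lam_gt0 lam_le) _.
rewrite ler_wpM2r ?powR_ge0 // ler_wpM2l // lerXn2r ?nnegrE ?abs_sum_ge0 ?(ltW S1_gt0) //.
by rewrite lerDr.
Qed.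

Unset Implicit Arguments.
Theorem lemma4p2 (R : realType) (N J : nat) (kappa0 kappaInf : R)
    (iota : 'I_J -> R) (z : 'I_J -> 'I_N -> R) :
  (7 <= N)%N -> (2 <= J)%N -> 0 < kappa0 -> 0 < kappaInf ->
  (forall i, iota i = 1 \/ iota i = -1) ->
  injective z ->
  let A := Astar kappa0 kappaInf iota z in
  (* lambda_max2 >~ delta1 lambda_max, constant independent of delta1 *)
  (exists c : R, 0 < c /\
     forall (delta1 : R) (lam : 'I_J -> R), 0 < delta1 -> (forall i, 0 < lam i) ->
     (forall I : {set 'I_J}, I != finset.set0 -> delta1 <= minTerm N A lam I) ->
     c * delta1 * lam_max lam <= lam_max2 lam) /\
  (* sum ~_{delta1} lambda_max^{4D-2} *)
  (forall delta1 : R, 0 < delta1 ->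
     exists c C : R, 0 < c /\ 0 < C /\
     forall lam : 'I_J -> R, (forall i, 0 < lam i) ->
     (forall I : {set 'I_J}, I != finset.set0 -> delta1 <= minTerm N A lam I) ->
     c * lam_max lam `^ (4 * Dexp R N - 2) <= mainSum N A lam /\
     mainSum N A lam <= C * lam_max lam `^ (4 * Dexp R N - 2)).
Proof.
move=> N_ge7 J_ge2 _ _ _ _ A.
have A_diag0 i : A i i = 0 by rewrite /A /Astar eqxx.
split.
  exists J.-1%:R^-1; split; first by rewrite invr_gt0 ltr0n -subn1 subn_gt0.
  by move=> d lam _; exact: lam_max2_ge.
by move=> d; apply: mainSum_asymp; [exact: leq_trans N_ge7 | exact: ltnW].
Qed.
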